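(* Let $\mathcal V$ be a finite set of variables, $\mathcal P$ a finite set of labels, and $\mathcal C$ a finite set of nonempty subsets (hyperedges) of $\mathcal V$. For each $C\in\mathcal C$ let $\mathcal D_C\subseteq\mathcal P^C$ be a set of labelings of $C$ and let $\hat\theta_{C,\vec d}\le 0$ for $\vec d\in\mathcal D_C$, defining the sparse pattern-based potential $\theta_C(\vec x_C)=\hat\theta_{C,\vec d}$ if $\vec x_C=\vec d\in\mathcal D_C$ and $\theta_C(\vec x_C)=0$ otherwise. For binary variables $y_{ip}\in\{0,1\}$ ($i\in\mathcal V,p\in\mathcal P$) and $z_{C,\vec d}\in\{0,1\}$ ($C\in\mathcal C,\vec d\in\mathcal D_C$) let $$E^*_I(\vec y,\vec z)=-\sum_{C\in\mathcal C}\sum_{\vec d\in\mathcal D_C}\hat\theta_{C,\vec d}\Big((|C|-1)z_{C,\vec d}-\sum_{\ell\in C}y_{\ell d_\ell}z_{C,\vec d}\Big),$$ and for $\vec\lambda\in\mathbb R^{\mathcal V}$ let $D(\vec\lambda)=\min_{\vec y,\vec z\text{ binary}}\Big(E^*_I(\vec y,\vec z)+\sum_{i\in\mathcal V}\lambda_i\big(\sum_{p\in\mathcal P}y_{ip}-1\big)\Big)$. Then $\max_{\vec\lambda\in\mathbb R^{\mathcal V}}D(\vec\lambda)$ equals the optimal value of the linear program $$\min_{\vec y}\ \sum_{C\in\mathcal C}\sum_{\vec d\in\mathcal D_C}\hat\theta_{C,\vec d}\,y_{C,\vec d}$$ subject to $y_{ip}\in[0,1]$ for all $i\in\mathcal V,p\in\mathcal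 P$; $y_{C,\vec d}\in[0,1]$ for all $C\in\mathcal C,\vec d\in\mathcal D_C$; $y_{C,\vec d}\le y_{\ell d_\ell}$ for all $C\in\mathcal C$, $\vec d\in\mathcal D_C$, $\ell\in C$; and $\sum_{p\in\mathcal P}y_{ip}=1$ for all $i\in\mathcal V$.
   Context: A labeling $\vec d\in\mathcal P^C$ of a hyperedge $C$ is a map $C\to\mathcal P$, and $d_\ell$ denotes its value at $\ell\in C$. The energy to be minimized is $E(\vec x)=\sum_{C\in\mathcal C}\theta_C(\vec x_C)$ over $\vec x\in\mathcal P^{\mathcal V}$; $y_{ip}$ are indicator variables of $x_i=p$, $E^*_I$ is a pairwise reformulation of the energy with auxiliary binary variables $z_{C,\vec d}$, and $D$ is the Lagrangian dual obtained by relaxing the consistency constraints $\sum_p y_{ip}=1$. *)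

From mathcomp Require Import all_boot all_order all_algebra.
From mathcomp Require Import reals.
Set Implicit Arguments. Unset Strict Implicit. Unset Printing Implicit Defensive.
Import Order.TTheory GRing.Theory Num.Theory.
Local Open Scope ring_scope.

Definition lab (V P : finType) (C : {set V}) := {ffun {i : V | i \in C} -> P}.

(* index type for the auxiliary variables z_{C,d} *)
Definition zidx (V P : finType) := {C : {set V} & lab P C}.

Definition b2r (R : realType) (b : bool) : R := (nat_of_bool b)%:R.

Section Defs.
Variables (R : realType) (V P : finType) (Cs : {set {set V}})
  (Dset : forall C : {set V}, {set lab P C})
  (th : forall C : {set V}, lab P C -> R).

Definition Estar (y : {ffun V * P -> bool}) (z : {ffun zidx V P -> bool}) : R :=
  - \sum_(C in Cs) \sum_(d in Dset C)
      th d * ((#|C|%:R - 1) * b2r R (z (Tagged (fun C => lab P C) d))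
              - \sum_(l : {i : V | i \in C})
                  b2r R (y (val l, d l)) * b2r R (z (Tagged (fun C => lab P C) d))).

Definition lagr (lam : V -> R) (y : {ffun V * P -> bool})
    (z : {ffun zidx V P -> bool}) : R :=
  Estar y z + \sum_(i : V) lam i * (\sum_(p : P) b2r R (y (i, p)) - 1).

Definition is_D_value (lam : V -> R) (m : R) : Prop :=
  (exists y z, lagr lam y z = m) /\ (forall y z, m <= lagr lam y z).

Definition lp_feasible (yl : V -> P -> R) (yc : forall C : {set V}, lab P C -> R)
    : Prop :=
  (forall i p, 0 <= yl i p <= 1) /\
  (forall C d, C \in Cs -> d \in Dset C -> 0 <= yc C d <= 1) /\
  (forall C d, C \in Cs -> d \in Dset C ->
     forall l : {i : V | i \in C}, yc C d <= yl (val l) (d l)) /\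
  (forall i, \sum_(p : P) yl i p = 1).

Definition lp_obj (yc : forall C : {set V}, lab P C -> R) : R :=
  \sum_(C in Cs) \sum_(d in Dset C) th d * yc C d.

End Defs.

From mathcomp Require Import all_boot all_order all_algebra.
From mathcomp Require Import reals ring lra.
Set Implicit Arguments. Unset Strict Implicit. Unset Printing Implicit Defensive.
Import Order.TTheory GRing.Theory Num.Theory.
Local Open Scope ring_scope.

(* The Lagrangian is affine in lambda, so D is the minimum of finitely many
   affine functions of lambda, one for each binary point (y, z).  Eliminating the
   coordinates of lambda one at a time (Fourier-Motzkin) shows that such a minimum
   is either unbounded above or attains its supremum at some lambda*, where it
   equals the mu-average of the constant terms E^*_I for a probability mu on
   binary points under which every coefficient sum_p y_ip - 1 averages to zero.
   Here the minimum is bounded, since choosing one fixed label everywhere gives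
   Lagrangian 0.  The mu-average of the binary points then satisfies the
   consistency constraints and, as all theta-hat are <= 0, is an LP point of cost
   at most max D.  Conversely, every LP point is a convex combination of binary
   points (peel off t times the indicator of its support, t its least positive
   entry), each of Lagrangian value at least max D. *)

Section FourierMotzkin.
Variables (R : realFieldType) (I : finType).

Lemma sum_delta_mul (K : finType) (j : K) (f : K -> R) :
  \sum_k (j == k)%:R * f k = f j.
Proof.
rewrite (bigD1 j) //= eqxx mul1r big1 ?addr0 // => k /negbTE.
by rewrite eq_sym => ->; rewrite mul0r.
Qed.

Lemma one_dim_elimination (K : finType) (g beta : K -> R) (T : R) :
  (forall k, beta k = 0 -> T <= g k) ->
  (forall k j, 0 < beta k -> beta j < 0 ->
     T <= (- beta j * g k + beta k * g j) / (beta k - beta j)) ->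
  exists s, forall k, T <= g k + beta k * s.
Proof.
move=> hzero hpair.
have hpair' k j : 0 < beta k -> beta j < 0 ->
    beta k * (T - g j) <= beta j * (T - g k).
  move=> hk hj; have hkj : 0 < beta k - beta j by rewrite subr_gt0 (lt_trans hj).
  by move: (hpair k j hk hj); rewrite ler_pdivlMr // => h; nra.
pose ratio k := (T - g k) / beta k.
have ratioK k : beta k != 0 -> beta k * ratio k = T - g k.
  by move=> hk; rewrite /ratio mulrC divfK.
case: (pickP (fun k => 0 < beta k)) => [k0 hk0 | nopos].
  have [km hkm kmax] := @arg_maxP _ _ _ k0 (fun k => 0 < beta k) ratio hk0.
  have hs := ratioK km (lt0r_neq0 hkm).
  exists (ratio km) => k; rewrite -lerBlDl.
  case: (ltrgtP 0 (beta k)) => hk.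
  - by move: (kmax k hk) => /=; rewrite /ratio ler_pdivrMr // => h; nra.
  - by have := hpair' km k hkm hk; nra.
  - by rewrite -hk mul0r subr_le0 hzero.
case: (pickP (fun k => beta k < 0)) => [j0 hj0 | noneg].
  have [jm hjm jmin] := @arg_minP _ _ _ j0 (fun k => beta k < 0) ratio hj0.
  have hs := ratioK jm (ltr0_neq0 hjm).
  exists (ratio jm) => k; rewrite -lerBlDl.
  case: (ltrgtP 0 (beta k)) => hk.
  - by move: (nopos k); rewrite hk.
  - by move: (jmin k hk) => /=; rewrite /ratio ler_ndivlMr // => h; nra.
  - by rewrite -hk mul0r subr_le0 hzero.
exists 0 => k; rewrite mulr0 addr0; apply: hzero.
case: (ltrgtP 0 (beta k)) => // hk; first by move: (nopos k); rewrite hk.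
by move: (noneg k); rewrite hk.
Qed.

Section EliminationStep.
Variables (K : finType) (b : K -> I -> R) (x : I).

(* Elimination of the coordinate [x]: a function whose [x]-coefficient vanishes
   is paired with itself, and a function with positive [x]-coefficient with one
   with negative [x]-coefficient, combined convexly so that [x] cancels. *)

Definition fm_admissible (p : K * K) : bool :=
  ((b p.1 x == 0) && (p.1 == p.2)) || ((0 < b p.1 x) && (b p.2 x < 0)).

Definition fm_pair := {p : K * K | fm_admissible p}.

Definition fm_weight1 (p : K * K) : R :=
  if b p.1 x == 0 then 1 else - b p.2 x / (b p.1 x - b p.2 x).

Definition fm_weight2 (p : K * K) : R :=
  if b p.1 x == 0 then 0 else b p.1 x / (b p.1 x - b p.2 x).

Definition fm_combine (f : K -> R) (p : fm_pair) : R :=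
  fm_weight1 (val p) * f (val p).1 + fm_weight2 (val p) * f (val p).2.

Lemma fm_weightsP (p : fm_pair) :
  [/\ 0 <= fm_weight1 (val p), 0 <= fm_weight2 (val p),
      fm_weight1 (val p) + fm_weight2 (val p) = 1
    & fm_combine (b^~ x) p = 0].
Proof.
case: p => [[k j]]; rewrite /fm_combine /fm_admissible /fm_weight1 /fm_weight2 /=.
case/orP=> [/andP[/eqP hk0 _]|/andP[hk hj]].
  by rewrite hk0 eqxx mulr0 mul0r addr0; split; rewrite ?ler01 ?lexx ?addr0.
have hkj : 0 < b k x - b j x by rewrite subr_gt0 (lt_trans hj).
rewrite gt_eqF //; split.
- by apply: divr_ge0; [rewrite oppr_ge0; exact: ltW | exact: ltW].
- by apply: divr_ge0; exact: ltW.
- by field; rewrite gt_eqF.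
- by field; rewrite gt_eqF.
Qed.

Lemma fm_combine_affine (B : {set I}) (a : K -> R) (l : I -> R) (p : fm_pair) :
  fm_combine (fun k => a k + \sum_(i in B) b k i * l i) p =
  fm_combine a p + \sum_(i in B) fm_combine (b^~ i) p * l i.
Proof.
rewrite /fm_combine !mulrDr addrACA !mulr_sumr -big_split /=; congr (_ + _).
by apply: eq_bigr => i _; ring.
Qed.

Lemma fm_lift (A : {set I}) (a : K -> R) (l : I -> R) (T : R) : x \in A ->
  (forall p, T <= fm_combine a p + \sum_(i in A :\ x) fm_combine (b^~ i) p * l i) ->
  exists s, forall k, T <= a k + \sum_(i in A) b k i * [eta l with x |-> s] i.
Proof.
move=> xA hT; set g := fun k => a k + \sum_(i in A :\ x) b k i * l i.
have {}hT p : T <= fm_combine g p by rewrite fm_combine_affine.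
have [|k j hk hj|s hs] := @one_dim_elimination K g (b^~ x) T.
- move=> k hk0; have adm : fm_admissible (k, k) by rewrite /fm_admissible /= hk0 !eqxx.
  move: (hT (exist fm_admissible _ adm)).
  by rewrite /fm_combine /fm_weight1 /fm_weight2 /= hk0 eqxx mul1r mul0r addr0.
- have adm : fm_admissible (k, j) by rewrite /fm_admissible /= hk hj orbT.
  have hkj : b k x - b j x != 0 by rewrite gt_eqF // subr_gt0 (lt_trans hj).
  move: (hT (exist fm_admissible _ adm)).
  rewrite /fm_combine /fm_weight1 /fm_weight2 /= gt_eqF // => h; apply: le_trans h _.
  by rewrite le_eqVlt; apply/orP; left; apply/eqP; field.
exists s => k; rewrite (big_setD1 x xA) /= eqxx addrCA addrC.
rewrite (eq_bigr (fun i => b k i * l i)); first exact: hs.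
by move=> i; rewrite !inE => /andP[/negbTE ->].
Qed.

Definition fm_pushforward (mu : fm_pair -> R) (k : K) : R :=
  \sum_p mu p * (fm_weight1 (val p) * ((val p).1 == k)%:R
               + fm_weight2 (val p) * ((val p).2 == k)%:R).

Lemma sum_fm_pushforward (mu : fm_pair -> R) (f : K -> R) :
  \sum_k fm_pushforward mu k * f k = \sum_p mu p * fm_combine f p.
Proof.
under eq_bigr do rewrite mulr_suml.
rewrite exchange_big /=; apply: eq_bigr => p _.
rewrite /fm_combine -(sum_delta_mul (val p).1) -(sum_delta_mul (val p).2).
rewrite !mulr_sumr -big_split mulr_sumr /=; apply: eq_bigr => k _; ring.
Qed.

End EliminationStep.

Lemma min_affine_unbounded_or_dual (A : {set I}) (K : finType)
    (a : K -> R) (b : K -> I -> R) :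
  (forall M, exists l, forall k, M <= a k + \sum_(i in A) b k i * l i) \/
  exists l mu,
    [/\ forall k, 0 <= mu k, \sum_k mu k = 1,
        forall i, i \in A -> \sum_k mu k * b k i = 0
      & forall k, \sum_k' mu k' * a k' <= a k + \sum_(i in A) b k i * l i].
Proof.
have [n] := ubnP #|A|; elim: n A K a b => // n IH A K a b; rewrite ltnS => hA.
case: (set_0Vmem A) => [-> | [x xA]].
  case: (pickP (@predT K)) => [k0 _ | K0]; last first.
    by left=> M; exists (fun=> 0) => k; have := K0 k.
  have [km _ kmin] := @arg_minP _ _ _ k0 predT a isT.
  right; exists (fun=> 0), (fun k => (km == k)%:R); split => [k | | i | k].
  - by rewrite ler0n.
  - by under eq_bigr do rewrite -[_%:R]mulr1; rewrite sum_delta_mul.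
  - by rewrite inE.
  - by rewrite sum_delta_mul big_set0 addr0; apply: kmin.
have hA' : (#|A :\ x| < n)%N by move: hA; rewrite (cardsD1 x) xA.
case: (IH (A :\ x) _ (fm_combine (b:=b) (x:=x) a) (fun p i => fm_combine (b^~ i) p) hA')
  => [unb | [l [mu [mu_ge0 mu_sum1 mu_slope mu_le]]]].
  left=> M; have [l hl] := unb M; have [s hs] := fm_lift xA hl.
  by exists [eta l with x |-> s].
have [s hs] := fm_lift xA mu_le.
right; exists [eta l with x |-> s], (fm_pushforward mu).
split => [k | | i iA | k].
- apply: sumr_ge0 => p _; have [w1 w2 _ _] := fm_weightsP p.
  by apply: mulr_ge0 => //; apply: addr_ge0; apply: mulr_ge0; rewrite ?ler0n.
- under eq_bigr do rewrite -[fm_pushforward _ _]mulr1.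
  rewrite sum_fm_pushforward -[RHS]mu_sum1; apply: eq_bigr => p _.
  by have [_ _ w12 _] := fm_weightsP p; rewrite /fm_combine !mulr1 w12 mulr1.
- rewrite sum_fm_pushforward; case: (eqVneq i x) => [-> | nix].
    by apply: big1 => p _; have [_ _ _ ->] := fm_weightsP p; rewrite mulr0.
  by apply: mu_slope; rewrite !inE nix.
- by rewrite sum_fm_pushforward.
Qed.

End FourierMotzkin.

Section Lagrangian.
Variables (R : realType) (V P : finType) (Cs : {set {set V}})
  (Dset : forall C : {set V}, {set lab P C})
  (th : forall C : {set V}, lab P C -> R).

Lemma b2rT : b2r R true = 1. Proof. by []. Qed.

Lemma b2rF : b2r R false = 0. Proof. by []. Qed.

Lemma le_b2r (b1 b2 : bool) : (b1 -> b2) -> b2r R b1 <= b2r R b2.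
Proof. by case: b1; case: b2 => // /(_ isT). Qed.

Lemma b2r_ge0 b : 0 <= b2r R b. Proof. exact: ler0n. Qed.

Lemma b2r_le1 b : b2r R b <= 1. Proof. by case: b; rewrite /b2r ?ler01 ?lexx. Qed.

Lemma sum_b2r (T : finType) (f : T -> bool) :
  \sum_t b2r R (f t) = #|[pred t | f t]|%:R.
Proof.
rewrite /b2r -natr_sum -sum1_card; congr _%:R; rewrite [RHS]big_mkcond.
by apply: eq_bigr => t _; rewrite inE; case: (f t).
Qed.

Lemma sum_b2r_forall (T : finType) (f : T -> bool) :
  [forall t, f t] -> \sum_t b2r R (f t) = #|T|%:R.
Proof. by move=> /forallP hf; rewrite sum_b2r; congr _%:R; apply: eq_card. Qed.

Lemma sum_b2r_sub_le_forall (T : finType) (f : T -> bool) :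
  \sum_t b2r R (f t) - (#|T|%:R - 1) <= b2r R [forall t, f t].
Proof.
case: (boolP [forall t, f t]) => [hf | /forallPn[t0 ht0]].
  by rewrite sum_b2r_forall // opprB addrC subrK.
rewrite sum_b2r subr_le0 lerBrDr natr1 ler_nat (cardD1 t0 T) inE /= ltnS.
apply/subset_leq_card/subsetP => t /=; rewrite !inE andbT.
by apply: contraTneq => ->.
Qed.

Definition pattern_in (C : {set V}) (d : lab P C) (y : V * P -> bool) : bool :=
  [forall l : {i | i \in C}, y (val l, d l)].

Definition pattern_gap (C : {set V}) (d : lab P C) (y : V * P -> bool) (zb : bool)
    : R :=
  (\sum_(l : {i | i \in C}) b2r R (y (val l, d l)) - (#|C|%:R - 1)) * b2r R zb.

Lemma pattern_gap_le (C : {set V}) (d : lab P C) y zb :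
  pattern_gap d y zb <= b2r R (zb && pattern_in d y).
Proof.
rewrite /pattern_gap; case: zb; last by rewrite mulr0.
by rewrite mulr1 -[#|C|]card_sig; apply: sum_b2r_sub_le_forall.
Qed.

Lemma pattern_gap_pattern_in (C : {set V}) (d : lab P C) y :
  pattern_gap d y (pattern_in d y) = b2r R (pattern_in d y).
Proof.
rewrite /pattern_gap; case hd: (pattern_in d y); last by rewrite mulr0.
by rewrite mulr1 -[#|C|]card_sig sum_b2r_forall // opprB addrC subrK.
Qed.

Lemma Estar_pattern_gap (y : {ffun V * P -> bool}) (z : {ffun zidx V P -> bool}) :
  Estar Cs Dset th y z = \sum_(C in Cs) \sum_(d in Dset C)
    th d * pattern_gap d y (z (Tagged (fun C => lab P C) d)).
Proof.
rewrite /Estar -sumrN; apply: eq_bigr => C _; rewrite -sumrN.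
by apply: eq_bigr => d _; rewrite /pattern_gap mulrBl -mulr_suml; ring.
Qed.

Definition relaxed_lagr (lam : V -> R) (x : V * P -> R)
    (yc : forall C : {set V}, lab P C -> R) : R :=
  \sum_(C in Cs) \sum_(d in Dset C) th d * yc C d
  + \sum_i lam i * (\sum_p x (i, p) - 1).

Definition relaxed_feasible (x : V * P -> R) (yc : forall C : {set V}, lab P C -> R) :=
  (forall ip, 0 <= x ip <= 1) /\
  (forall C d, C \in Cs -> d \in Dset C ->
     yc C d <= 1 /\ forall l : {i | i \in C}, yc C d <= x (val l, d l)).

Lemma eq_relaxed_lagr lam x1 x2 (yc1 yc2 : forall C : {set V}, lab P C -> R) :
  x1 =1 x2 -> (forall C d, yc1 C d = yc2 C d) ->
  relaxed_lagr lam x1 yc1 = relaxed_lagr lam x2 yc2.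
Proof.
move=> hx hyc; rewrite /relaxed_lagr; congr (_ + _).
  by apply: eq_bigr => C _; apply: eq_bigr => d _; rewrite hyc.
by apply: eq_bigr => i _; congr (_ * (_ - _)); apply: eq_bigr => p _; rewrite hx.
Qed.

Lemma relaxed_lagr_convex lam t x1 x2 (yc1 yc2 : forall C : {set V}, lab P C -> R) :
  relaxed_lagr lam (fun ip => t * x1 ip + (1 - t) * x2 ip)
    (fun C d => t * yc1 C d + (1 - t) * yc2 C d)
  = t * relaxed_lagr lam x1 yc1 + (1 - t) * relaxed_lagr lam x2 yc2.
Proof.
rewrite /relaxed_lagr !mulrDr addrACA; congr (_ + _).
  rewrite !mulr_sumr -big_split; apply: eq_bigr => C _.
  by rewrite !mulr_sumr -big_split; apply: eq_bigr => d _ /=; ring.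
rewrite !mulr_sumr -big_split; apply: eq_bigr => i _ /=.
by rewrite big_split /= -!mulr_sumr; ring.
Qed.

Lemma lagr_binary lam (y : V * P -> bool) :
  lagr Cs Dset th lam [ffun ip => y ip] [ffun k : zidx V P => pattern_in (tagged k) y]
  = relaxed_lagr lam (fun ip => b2r R (y ip)) (fun C d => b2r R (pattern_in d y)).
Proof.
rewrite /lagr Estar_pattern_gap /relaxed_lagr; congr (_ + _).
  apply: eq_bigr => C _; apply: eq_bigr => d _; rewrite ffunE /=.
  rewrite -pattern_gap_pattern_in /pattern_gap.
  by under eq_bigr do rewrite ffunE.
by apply: eq_bigr => i _; under eq_bigr do rewrite ffunE.
Qed.

Hypothesis th_le0 : forall C (d : lab P C), C \in Cs -> d \in Dset C -> th d <= 0.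

Lemma relaxed_lagr_binary_le lam (y : V * P -> bool) yc :
  relaxed_feasible (fun ip => b2r R (y ip)) yc ->
  relaxed_lagr lam (fun ip => b2r R (y ip)) (fun C d => b2r R (pattern_in d y))
  <= relaxed_lagr lam (fun ip => b2r R (y ip)) yc.
Proof.
move=> [_ hyc]; rewrite lerD2r; apply: ler_sum => C hC; apply: ler_sum => d hd.
apply: ler_wnM2l; first exact: th_le0.
have [yc_le1 yc_le] := hyc C d hC hd.
case: (boolP (pattern_in d y)) => [// | /forallPn[l hl]].
by move: (yc_le l); rewrite (negbTE hl).
Qed.

Definition support (x : V * P -> R) := [set ip | 0 < x ip].

(* With [t] the least positive entry of [x], [x = t 1_{supp x} + (1 - t) x'],
   the pattern variables split in the same way, and [x'] has smaller support. *)
Section Peel.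
Variables (lam : V -> R) (x : V * P -> R) (yc : forall C : {set V}, lab P C -> R).
Hypothesis x_yc_feasible : relaxed_feasible x yc.
Variable j : V * P.
Hypothesis x_j_frac : 0 < x j < 1.

Let pos ip := 0 < x ip.
Let jm := Order.arg_min j pos x.
Let t := x jm.
Let x' ip := (x ip - t * b2r R (pos ip)) / (1 - t).
Let yc' C (d : lab P C) := (yc d - t * b2r R (pattern_in d pos)) / (1 - t).

Lemma peel_min : [/\ 0 < t, t < 1 & forall ip, pos ip -> t <= x ip].
Proof.
have [xj_gt0 xj_lt1] := andP x_j_frac.
rewrite /t /jm; case: arg_minP => // k pos_k kmin; split => //.
exact: le_lt_trans (kmin j xj_gt0) xj_lt1.
Qed.

Lemma peel_feasible : relaxed_feasible x' yc'.
Proof.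
have [t_gt0 t_lt1 t_min] := peel_min; have ut : 0 < 1 - t by rewrite subr_gt0.
have [x01 hyc] := x_yc_feasible.
have x_off ip : ~~ pos ip -> x ip = 0.
  by move=> hp; have /andP[x0 _] := x01 ip; apply/eqP; rewrite eq_le x0 leNgt andbT.
have x'01 ip : 0 <= x' ip <= 1.
  rewrite /x'; case: (boolP (pos ip)) => hp.
    have /andP[_ x1] := x01 ip.
    rewrite b2rT mulr1 ler_pdivrMr // mul1r lerD2r x1 andbT.
    by apply: divr_ge0; [rewrite subr_ge0; exact: t_min | exact: ltW].
  by rewrite x_off // b2rF mulr0 subrr mul0r lexx ler01.
split => // C d hC hd; have [yc1 ycx] := hyc C d hC hd; rewrite /yc'.
case: (boolP (pattern_in d pos)) => [/forallP hd_pos | /forallPn[l0 hl0]].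
  rewrite b2rT mulr1; split=> [|l]; first by rewrite ler_pdivrMr // mul1r lerD2r.
  by rewrite /x' hd_pos b2rT mulr1 ler_pM2r ?invr_gt0 // lerD2r.
have yc_le0 : yc d <= 0 by rewrite -(x_off _ hl0).
rewrite b2rF mulr0 subr0; split=> [|l].
  by apply: le_trans ler01; rewrite pmulr_lle0 ?invr_gt0.
have /andP[x'0 _] := x'01 (val l, d l).
by apply: le_trans x'0; rewrite pmulr_lle0 ?invr_gt0.
Qed.

Lemma peel_support : (#|support x'| < #|support x|)%N.
Proof.
have [t_gt0 t_lt1 _] := peel_min; have ut : 0 < 1 - t by rewrite subr_gt0.
apply/proper_card/properP; split.
  apply/subsetP => ip; rewrite !inE; apply: contraTT => hp.
  have /andP[x0 _] := x_yc_feasible.1 ip.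
  have x_ip : x ip = 0 by apply/eqP; rewrite eq_le x0 leNgt andbT.
  by rewrite /x' /pos x_ip ltxx b2rF mulr0 subrr mul0r ltxx.
have pos_jm : pos jm by rewrite /jm; case: arg_minP => //; case/andP: x_j_frac.
by exists jm; rewrite !inE // /x' pos_jm b2rT mulr1 subrr mul0r ltxx.
Qed.

Lemma peel_decomposition :
  relaxed_lagr lam x yc =
  t * relaxed_lagr lam (fun ip => b2r R (pos ip)) (fun C d => b2r R (pattern_in d pos))
  + (1 - t) * relaxed_lagr lam x' yc'.
Proof.
have [_ t_lt1 _] := peel_min; have ut : 1 - t != 0 by rewrite subr_eq0 gt_eqF.
rewrite -relaxed_lagr_convex; apply: eq_relaxed_lagr => [ip | C d];
  by rewrite /x' /yc'; field.
Qed.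

Lemma peel : exists t x'' yc'',
  [/\ 0 < t < 1, relaxed_feasible x'' yc'', (#|support x''| < #|support x|)%N
    & relaxed_lagr lam x yc =
      t * relaxed_lagr lam (fun ip => b2r R (pos ip)) (fun C d => b2r R (pattern_in d pos))
      + (1 - t) * relaxed_lagr lam x'' yc''].
Proof.
have [t_gt0 t_lt1 _] := peel_min.
exists t, x', yc'; split; rewrite ?t_gt0 ?t_lt1 //.
- exact: peel_feasible.
- exact: peel_support.
- exact: peel_decomposition.
Qed.

End Peel.

Lemma relaxed_lagr_ge lam m :
  (forall y : V * P -> bool,
     m <= relaxed_lagr lam (fun ip => b2r R (y ip)) (fun C d => b2r R (pattern_in d y))) ->
  forall x yc, relaxed_feasible x yc -> m <= relaxed_lagr lam x yc.
Proof.
move=> m_le_binary x yc.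
have [n] := ubnP #|support x|; elim: n x yc => // n IH x yc; rewrite ltnS => hn hfeas.
case: (pickP (fun ip => 0 < x ip < 1)) => [j x_j_frac | x_binary].
  have [t [x' [yc' [/andP[t_gt0 t_lt1] hfeas' hsupp ->]]]] := peel lam hfeas x_j_frac.
  have -> : m = t * m + (1 - t) * m by ring.
  apply: lerD; apply: ler_wpM2l.
  - exact: ltW.
  - exact: m_le_binary.
  - by rewrite subr_ge0 ltW.
  - by apply: IH hfeas'; apply: leq_trans hsupp hn.
have x_b2r : x =1 (fun ip => b2r R (0 < x ip)).
  move=> ip; have /andP[x0 x1] := hfeas.1 ip; move: (x_binary ip) => /=.
  case: (ltrgtP 0 (x ip)) => [x_gt0 /negbT | x_lt0 | <-] //=.
    by rewrite -leNgt => x_ge1; apply/eqP; rewrite eq_le x1.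
  by move: x0; rewrite leNgt x_lt0.
apply: le_trans (m_le_binary (fun ip => 0 < x ip)) _.
rewrite (eq_relaxed_lagr lam x_b2r (fun C d => erefl (yc C d))).
have [x01 hyc] := hfeas; apply: relaxed_lagr_binary_le.
split=> [ip | C d hC hd]; first by rewrite -x_b2r.
by have [yc1 ycx] := hyc C d hC hd; split=> // l; rewrite -x_b2r.
Qed.

Lemma lagr_lower_bound_le_lp lam m :
  (forall y z, m <= lagr Cs Dset th lam y z) ->
  forall yl yc, lp_feasible Cs Dset yl yc -> m <= lp_obj Cs Dset th yc.
Proof.
move=> m_le yl yc [yl01 [yc01 [yc_le yl_sum]]].
have -> : lp_obj Cs Dset th yc = relaxed_lagr lam (fun ip => yl ip.1 ip.2) yc.
  rewrite /relaxed_lagr /lp_obj [X in _ = _ + X]big1 ?addr0 // => i _ /=.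
  by rewrite yl_sum subrr mulr0.
apply: relaxed_lagr_ge => [y | ]; first by rewrite -lagr_binary.
split=> [ip | C d hC hd]; first exact: yl01.
by have /andP[_ ->] := yc01 C d hC hd; split=> //; apply: yc_le.
Qed.

Lemma lagr_single_label lam (p0 : P) :
  lagr Cs Dset th lam [ffun ip : V * P => ip.2 == p0] [ffun=> false] = 0.
Proof.
rewrite /lagr Estar_pattern_gap big1 => [|C _]; last first.
  by apply: big1 => d _; rewrite ffunE /pattern_gap b2rF !mulr0.
rewrite add0r big1 // => i _; rewrite (bigD1 p0) //= big1 => [|p /negbTE hp].
  by rewrite ffunE eqxx b2rT addr0 subrr mulr0.
by rewrite ffunE /= hp.
Qed.

Definition label_sum_defect (y : {ffun V * P -> bool}) (i : V) : R :=
  \sum_p b2r R (y (i, p)) - 1.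

Lemma lagr_affine lam y z :
  lagr Cs Dset th lam y z =
  Estar Cs Dset th y z + \sum_(i in [set: V]) label_sum_defect y i * lam i.
Proof.
by rewrite /lagr; congr (_ + _); apply: eq_big => [i | i _]; rewrite ?in_setT // mulrC.
Qed.

Local Notation binary_point := ({ffun V * P -> bool} * {ffun zidx V P -> bool})%type.

Section DualCertificate.
Variable mu : binary_point -> R.
Hypotheses (mu_ge0 : forall k, 0 <= mu k) (mu_sum1 : \sum_k mu k = 1)
  (mu_defect0 : forall i, \sum_k mu k * label_sum_defect k.1 i = 0).

Let dual_value := \sum_k mu k * Estar Cs Dset th k.1 k.2.

Lemma lagr_average lam : \sum_k mu k * lagr Cs Dset th lam k.1 k.2 = dual_value.
Proof.
under eq_bigr do rewrite lagr_affine mulrDr.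
rewrite big_split /= [X in _ + X](_ : _ = 0) ?addr0 //.
under eq_bigr do rewrite mulr_sumr.
rewrite exchange_big /= big1 // => i _.
by under eq_bigr do rewrite mulrA; rewrite -mulr_suml mu_defect0 mul0r.
Qed.

Lemma average_le_of_lower_bound (f : binary_point -> R) m :
  (forall k, m <= f k) -> m <= \sum_k mu k * f k.
Proof.
move=> m_le; rewrite -[m]mul1r -mu_sum1 mulr_suml.
by apply: ler_sum => k _; apply: ler_wpM2l.
Qed.

Lemma D_value_le_dual_value lam m : is_D_value Cs Dset th lam m -> m <= dual_value.
Proof.
by move=> [_ m_le]; rewrite -(lagr_average lam); apply: average_le_of_lower_bound => k.
Qed.

Lemma is_D_value_dual_value lam :
  (forall y z, dual_value <= lagr Cs Dset th lam y z) ->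
  is_D_value Cs Dset th lam dual_value.
Proof.
move=> dual_le; split=> //.
have [k _ kmin] := @arg_minP _ _ _ ([ffun=> false], [ffun=> false]) predT
  (fun k => lagr Cs Dset th lam k.1 k.2) isT.
exists k.1, k.2; apply/eqP; rewrite eq_le dual_le andbT -(lagr_average lam).
by apply: average_le_of_lower_bound => k'; apply: kmin.
Qed.

Lemma average_b2r_01 (f : binary_point -> bool) :
  0 <= \sum_k mu k * b2r R (f k) <= 1.
Proof.
rewrite sumr_ge0 => [|k _]; last exact: mulr_ge0 (mu_ge0 k) (b2r_ge0 _).
rewrite -mu_sum1; apply: ler_sum => k _.
by rewrite -[leRHS]mulr1 ler_wpM2l // b2r_le1.
Qed.

Lemma lp_attains_dual_value lam :
  (forall y z, dual_value <= lagr Cs Dset th lam y z) ->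
  exists yl yc, lp_feasible Cs Dset yl yc /\ lp_obj Cs Dset th yc = dual_value.
Proof.
move=> dual_le.
pose yl i p := \sum_k mu k * b2r R (k.1 (i, p)).
pose yc C (d : lab P C) :=
  \sum_k mu k * b2r R (k.2 (Tagged (fun C => lab P C) d) && pattern_in d k.1).
have feasible : lp_feasible Cs Dset yl yc.
  split; [|split; [|split]] => [i p | C d _ _ | C d _ _ l | i].
  - exact: average_b2r_01.
  - exact: average_b2r_01.
  - apply: ler_sum => k _; apply: ler_wpM2l => //; apply: le_b2r.
    by case/andP=> _ /forallP; apply.
  - rewrite /yl exchange_big /=.
    transitivity (\sum_k (mu k * label_sum_defect k.1 i + mu k)).
      by apply: eq_bigr => k _; rewrite /label_sum_defect -mulr_sumr; ring.
    by rewrite big_split /= mu_defect0 mu_sum1 add0r.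
exists yl, yc; split=> //; apply/eqP; rewrite eq_le.
rewrite (lagr_lower_bound_le_lp dual_le feasible) andbT.
have -> : lp_obj Cs Dset th yc = \sum_k mu k * \sum_(C in Cs) \sum_(d in Dset C)
    th d * b2r R (k.2 (Tagged (fun C => lab P C) d) && pattern_in d k.1).
  under [RHS]eq_bigr do rewrite mulr_sumr.
  rewrite /lp_obj exchange_big /=; apply: eq_bigr => C _.
  under [RHS]eq_bigr do rewrite mulr_sumr.
  rewrite exchange_big /=; apply: eq_bigr => d _.
  by rewrite /yc mulr_sumr; apply: eq_bigr => k _; ring.
apply: ler_sum => k _; apply: ler_wpM2l => //.
rewrite Estar_pattern_gap; apply: ler_sum => C hC; apply: ler_sum => d hd.
by apply: ler_wnM2l; [exact: th_le0 | exact: pattern_gap_le].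
Qed.

End DualCertificate.

End Lagrangian.

Theorem theorem5 (R : realType) (V P : finType) (Cs : {set {set V}})
  (Dset : forall C : {set V}, {set lab P C})
  (th : forall C : {set V}, lab P C -> R)
  (hP : (0 < #|P|)%N)
  (hCs : forall C, C \in Cs -> C != set0)
  (hth : forall C (d : lab P C), C \in Cs -> d \in Dset C -> th C d <= 0) :
  exists (lam_star : V -> R) (m_star : R),
    (* m_star = D(lam_star) = max_lambda D(lambda) *)
    is_D_value Cs Dset th lam_star m_star /\
    (forall (lam : V -> R) (m : R), is_D_value Cs Dset th lam m -> m <= m_star) /\
    (* m_star is the optimal value of the LP *)
    (exists yl yc, lp_feasible Cs Dset yl yc /\ lp_obj Cs Dset th yc = m_star) /\
    (forall yl yc, lp_feasible Cs Dset yl yc -> m_star <= lp_obj Cs Dset th yc).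
Proof.
have [p0 _] := card_gt0P hP.
have [unbounded | [lam [mu [mu_ge0 mu_sum1 mu_defect0 mu_le]]]] :=
  min_affine_unbounded_or_dual [set: V]
    (fun k : {ffun V * P -> bool} * {ffun zidx V P -> bool} => Estar Cs Dset th k.1 k.2)
    (fun k => label_sum_defect R k.1).
  have [l /(_ ([ffun ip => ip.2 == p0], [ffun=> false]))] := unbounded 1.
  by rewrite -lagr_affine lagr_single_label ler10.
have {}mu_defect0 i := mu_defect0 i (in_setT i).
have dual_le y z : \sum_k mu k * Estar Cs Dset th k.1 k.2 <= lagr Cs Dset th lam y z.
  by rewrite lagr_affine; apply: (mu_le (y, z)).
exists lam, (\sum_k mu k * Estar Cs Dset th k.1 k.2); split; [|split; [|split]].
- exact: is_D_value_dual_value.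
- by move=> lam' m; apply: D_value_le_dual_value.
- exact: lp_attains_dual_value.
- exact: lagr_lower_bound_le_lp.
Qed.
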